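(* Let $G$ be a finite group, $n = \exp(G)$, and $\sigma \in \mathrm{Gal}(\mathbb{Q}_n:\mathbb{Q})$. Suppose $\sigma$ fixes all but $4$ irreducible characters of $G$ and has exactly two orbits of size $2$ on $\mathrm{Irr}(G)$, so that the characters not fixed by $\sigma$ are $X = \{\chi_1, \sigma\chi_1, \chi_2, \sigma\chi_2\}$. If $x \in G$ represents a conjugacy class not fixed by $\sigma$, then $$|C_G(x)| = |\chi_1(x) - \sigma\chi_1(x)|^2 + |\chi_2(x) - \sigma\chi_2(x)|^2.$$
   Context: $\exp(G)$ is the exponent of $G$; $\mathbb{Q}_n=\mathbb{Q}(\zeta)$ with $\zeta$ a primitive $n$-th root of unity. For $\sigma\in\mathrm{Gal}(\mathbb{Q}_n:\mathbb{Q})$ with $\sigma(\zeta)=\zeta^{r}$ ($r$ coprime to $n$), $\sigma$ acts on $\mathrm{Irr}(G)$ (complex irreducible characters) by $(\sigma\chi)(g)=\sigma(\chi(g))$ and on conjugacy classes by $\sigma\cdot x^G=(x^{r})^G$; then $(\sigma\chi)(x)=\chi(\sigma\cdot x)$. *)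

From mathcomp Require Export all_boot all_order all_algebra all_fingroup all_solvable all_field all_character.
Set Implicit Arguments. Unset Strict Implicit. Unset Printing Implicit Defensive.

From mathcomp Require Import ring.
Import GRing.Theory Num.Theory.
Local Open Scope ring_scope.

(* Since sigma acts on the values of characters at x by raising x to the r-th
   power, the second orthogonality relations for the pairs (x, x) and
   (x, x^r) give |C_G(x)| = sum_chi chi(x) (chi(x) - sigma chi(x))^*.  The
   terms of the sigma-fixed characters vanish, and each orbit {chi, sigma chi}
   of size 2 contributes |chi(x) - sigma chi(x)|^2. *)

Section GaloisActionOnCharacters.

Set Implicit Arguments. Unset Strict Implicit.

Variables (gT : finGroupType) (G : {group gT}) (r : nat).
Variable u : {rmorphism algC -> algC}.
Hypothesis u_exponent : forall z : algC, z ^+ exponent G = 1 -> u z = z ^+ r.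

(* Restricted to <[x]>, chi is a sum of linear characters, whose values at x
   are exponent G-th roots of unity. *)
Lemma cfAut_char_expg (chi : 'CF(G)) (x : gT) :
  chi \is a character -> x \in G -> cfAut u chi x = chi (x ^+ r)%g.
Proof.
move=> Nchi Gx; have sxG: <[x]>%g \subset G by rewrite cycle_subG.
have cycle_x := cycle_id x.
rewrite cfunE -(cfResE chi sxG cycle_x) -(cfResE chi sxG (mem_cycle x r)).
have [s ->] := char_sum_irr (cfRes_char <[x]>%g Nchi).
rewrite !sum_cfunE rmorph_sum; apply: eq_bigr => j _.
have Lj: 'chi[<[x]>%G]_j \is a linear_char by rewrite irr_cyclic_lin ?cycle_cyclic.
by rewrite lin_charX //; apply: u_exponent; rewrite -lin_charX // expg_exponent // lin_char1.
Qed.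

Lemma card_cent1_sum_irr (x : gT) :
  x \in G -> ((x ^+ r) ^: G != x ^: G)%g ->
  #|'C_G[x]%g|%:R = \sum_i 'chi[G]_i x * ('chi_i x - cfAut u 'chi_i x)^*.
Proof.
move=> Gx not_conj_xr; have Gxr: (x ^+ r)%g \in G by rewrite groupX.
have x_notin_xrG: (x \in (x ^+ r) ^: G)%g = false.
  by apply: contraNF not_conj_xr => /class_eqP ->.
have := second_orthogonality_relation x Gxr; rewrite x_notin_xrG mulr0n.
have := second_orthogonality_relation x Gx; rewrite class_refl mulr1n.
move=> <- orth_xr; rewrite -[LHS]subr0 -[X in _ - X]orth_xr -sumrB.
apply: eq_bigr => i _.
by rewrite cfAut_char_expg ?irr_char // rmorphB mulrBr.
Qed.

End GaloisActionOnCharacters.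

Lemma mul_conj_subr_pair (a b : algC) :
  a * (a - b)^* + b * (b - a)^* = `|a - b| ^+ 2.
Proof. by rewrite normCK !rmorphB; ring. Qed.

Theorem mainTheorem10 (gT : finGroupType) (G : {group gT})
    (r : nat) (u : {rmorphism algC -> algC}) (i1 i2 : Iirr G) (x : gT) :
  coprime r (exponent G) ->
  (forall z : algC, z ^+ exponent G = 1 -> u z = z ^+ r) ->
  cfAut u (cfAut u 'chi_i1) = 'chi_i1 ->
  cfAut u (cfAut u 'chi_i2) = 'chi_i2 ->
  uniq [:: 'chi_i1; cfAut u 'chi_i1; 'chi_i2; cfAut u 'chi_i2] ->
  (forall i : Iirr G, cfAut u 'chi_i != 'chi_i <->
     'chi_i \in [:: 'chi_i1; cfAut u 'chi_i1; 'chi_i2; cfAut u 'chi_i2]) ->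
  x \in G ->
  ((x ^+ r) ^: G != x ^: G)%g ->
  (#|('C_G[x])%g|%:R : algC) =
    `|'chi_i1 x - cfAut u 'chi_i1 x| ^+ 2 + `|'chi_i2 x - cfAut u 'chi_i2 x| ^+ 2.
Proof.
move=> _ u_exponent u2_chi1 u2_chi2 uniq_moved moved Gx not_conj_xr.
rewrite (card_cent1_sum_irr u_exponent Gx not_conj_xr).
pose s := [:: i1; aut_Iirr u i1; i2; aut_Iirr u i2].
have moved_s: [:: 'chi_i1; cfAut u 'chi_i1; 'chi_i2; cfAut u 'chi_i2]
    = map (tnth (irr G)) s by rewrite /= !aut_IirrE.
have uniq_s: uniq s by rewrite -(map_inj_uniq irr_inj) -moved_s.
rewrite -(big_rmcond _ _ (P := mem s)) => [|i i_notin_s].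
  by rewrite -big_uniq //= !big_cons big_nil addr0 !aut_IirrE u2_chi1 u2_chi2
     addrA !mul_conj_subr_pair.
have /eqP ->: cfAut u 'chi_i == 'chi_i.
  by apply: contraNT i_notin_s => /moved; rewrite moved_s (mem_map irr_inj).
by rewrite subrr rmorph0 mulr0.
Qed.
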